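(* For every integer $i\ge 1$, the sequence $\{d_i(m)\}_{m\ge i}$ is strictly ratio-log-convex; that is, for every $i\ge 1$ and every $m\ge i+2$, $$\left(\frac{d_i(m)}{d_i(m-1)}\right)^2<\frac{d_i(m-1)}{d_i(m-2)}\cdot\frac{d_i(m+1)}{d_i(m)}.$$
   Context: For integers $m\ge 0$ and $0\le i\le m$, the Boros–Moll numbers are $$d_i(m)=2^{-2m}\sum_{k=i}^{m}2^k\binom{2m-2k}{m-k}\binom{m+k}{k}\binom{k}{i}.$$ *)

From mathcomp Require Import all_boot all_order all_algebra.
Set Implicit Arguments. Unset Strict Implicit. Unset Printing Implicit Defensive.
Import Order.TTheory GRing.Theory Num.Theory.
Local Open Scope ring_scope.

Definition boros_moll (i m : nat) : rat :=
  (2%:R ^+ (2 * m))^-1 *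
  \sum_(i <= k < m.+1)
     (2%:R ^+ k * ('C(2 * m - 2 * k, m - k) * 'C(m + k, k) * 'C(k, i))%N%:R).

From mathcomp Require Import all_boot all_order all_algebra.
From mathcomp Require Import ring lra zify.
Set Implicit Arguments. Unset Strict Implicit. Unset Printing Implicit Defensive.
Import Order.TTheory GRing.Theory Num.Theory.
Local Open Scope ring_scope.

(* Write d_i(m) = 4^-m c_i(m).  A Zeilberger certificate gives Moll's three-term
   recurrence for c_i(m), so the ratios r(m) = d_i(m+1)/d_i(m) satisfy
   r(m+1) = A(m) - B(m)/r(m) with explicit rational A, B > 0.  Since
   y |-> A - B/y is increasing, an explicit rational function L with L(i) = r(i)
   and L(m+1) <= A(m) - B(m)/L(m) is a lower bound for r.  For three consecutive
   ratios x, y, z, eliminating x and z with the recurrence turns y^2 < x z into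
   the positivity of a quartic in y, which holds for y >= L because, in the
   variables j = i - 1 and k = m - i, its Taylor expansion at L has nonnegative
   integer polynomial coefficients. *)


Section BinomialRatios.

Context {R : numFieldType}.

Lemma natr_binSS (n r : nat) :
  'C(n.+1, r.+1)%:R = 'C(n, r)%:R * n.+1%:R / r.+1%:R :> R.
Proof.
have /(congr1 (fun x => x%:R : R)) := mul_bin_diag n.+1 r; rewrite /= !natrM => e.
have nz : r.+1%:R != 0 :> R by rewrite pnatr_eq0.
by apply: (mulfI nz); rewrite -e mulrCA mulfV // mulr1 mulrC.
Qed.

Lemma natr_binS (n r : nat) : (r <= n)%N ->
  'C(n.+1, r)%:R = 'C(n, r)%:R * n.+1%:R / (n.+1 - r)%:R :> R.
Proof.
move=> le_rn; have nz : (n.+1 - r)%:R != 0 :> R by rewrite pnatr_eq0 subn_eq0 -ltnNge.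
have /(congr1 (fun x => x%:R : R)) := mul_bin_down n.+1 r; rewrite /= !natrM => e.
by apply: (mulfI nz); rewrite -e mulrCA mulfV // mulr1 mulrC.
Qed.

Lemma natr_binSr (n r : nat) :
  'C(n, r.+1)%:R = 'C(n, r)%:R * (n - r)%:R / r.+1%:R :> R.
Proof.
have /(congr1 (fun x => x%:R : R)) := mul_bin_left n r; rewrite /= !natrM => e.
have nz : r.+1%:R != 0 :> R by rewrite pnatr_eq0.
by apply: (mulfI nz); rewrite e mulrCA mulfV // mulr1 mulrC.
Qed.

End BinomialRatios.


Ltac nonzero_by_nra := repeat (apply/andP; split); apply: lt0r_neq0; nra.

Definition bm_term (i m k : nat) : rat :=
  2%:R ^+ k * ('C(2 * m - 2 * k, m - k) * 'C(m + k, k) * 'C(k, i))%N%:R.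

Definition bm_sum (i m : nat) : rat := \sum_(i <= k < m.+1) bm_term i m k.

Lemma boros_mollE (i m : nat) : boros_moll i m = (2%:R ^+ (2 * m))^-1 * bm_sum i m.
Proof. by []. Qed.

Definition moll_coef0 (i m : nat) : rat :=
  - (4 * (m%:R + i%:R + 1) * (4 * m%:R + 3) * (4 * m%:R + 5)).
Definition moll_coef1 (i m : nat) : rat :=
  2 * (m%:R + 1) * (8 * m%:R ^+ 2 + 24 * m%:R + 19 - 4 * i%:R ^+ 2).
Definition moll_coef2 (i m : nat) : rat :=
  - ((m%:R + 1) * (m%:R + 2) * (m%:R + 2 - i%:R)).

(* Zeilberger certificate for moll_rec. *)
Definition bm_cert_poly (i m k : rat) : rat :=
  -8 - 8 * i - 20 * m - 12 * m * i - 16 * m ^+ 2 - 4 * m ^+ 2 * i - 4 * m ^+ 3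
  + 14 * k - 4 * k * i + 20 * k * m + 8 * k * m ^+ 2 - 8 * k ^+ 2 + 4 * k ^+ 2 * i
  - 4 * k ^+ 2 * m.
Definition bm_cert (i m k : nat) : rat :=
  2%:R ^+ k.+1 * (i%:R + 1)
  * ('C(2 * (m.+1 - k), m.+1 - k) * 'C(m + k, k) * 'C(k, i.+1))%N%:R
  * bm_cert_poly i%:R m%:R k%:R / (m%:R + 2 - k%:R).

Lemma moll_rec_term (i m k : nat) : (i <= k <= m)%N ->
  moll_coef0 i m * bm_term i m k + moll_coef1 i m * bm_term i m.+1 k
  + moll_coef2 i m * bm_term i m.+2 k = bm_cert i m k.+1 - bm_cert i m k.
Proof.
case/andP => le_ik le_km; have [q ->] : exists q, m = (k + q)%N by exists (m - k)%N; lia.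
rewrite /bm_term /bm_cert /moll_coef0 /moll_coef1 /moll_coef2.
have -> : (2 * (k + q) - 2 * k = q + q)%N by lia.
have -> : (k + q - k = q)%N by lia.
have -> : (2 * (k + q).+1 - 2 * k = (q + q).+2)%N by lia.
have -> : ((k + q).+1 - k = q.+1)%N by lia.
have -> : (2 * (k + q).+2 - 2 * k = (q + q).+4)%N by lia.
have -> : ((k + q).+2 - k = q.+2)%N by lia.
have -> : ((k + q).+1 + k = (k + q + k).+1)%N by lia.
have -> : ((k + q).+2 + k = (k + q + k).+2)%N by lia.
have -> : ((k + q).+1 - k.+1 = q)%N by lia.
have -> : (2 * q = q + q)%N by lia.
have -> : (k + q + k.+1 = (k + q + k).+1)%N by lia.
have -> : (2 * q.+1 = (q + q).+2)%N by lia.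
rewrite !natrM (natr_binSS (q + q).+3 q.+1) (@natr_binS _ (q + q).+2 q.+1); last by lia.
rewrite (natr_binSS (q + q).+1 q) (@natr_binS _ (q + q) q); last by lia.
rewrite (@natr_binS _ (k + q + k).+1 k); last by lia.
rewrite (@natr_binS _ (k + q + k) k); last by lia.
rewrite (natr_binSS (k + q + k) k) (natr_binSr k i) (natr_binSS k i).
have -> : ((q + q).+3 - q.+1 = q.+2)%N by lia.
have -> : ((q + q).+1 - q = q.+1)%N by lia.
have -> : ((k + q + k).+2 - k = (k + q).+2)%N by lia.
have -> : ((k + q + k).+1 - k = (k + q).+1)%N by lia.
rewrite natrB // !exprS /bm_cert_poly.
have hk : (0 : rat) <= k%:R := ler0n _ _.
have hq : (0 : rat) <= q%:R := ler0n _ _.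
have hi : (0 : rat) <= i%:R := ler0n _ _.
have hik : (i%:R : rat) <= k%:R by rewrite ler_nat.
field; nonzero_by_nra.
Qed.

Lemma moll_rec_boundary (i m : nat) : (i <= m)%N ->
  bm_cert i m m.+1 + moll_coef1 i m * bm_term i m.+1 m.+1
  + moll_coef2 i m * bm_term i m.+2 m.+1 + moll_coef2 i m * bm_term i m.+2 m.+2 = 0.
Proof.
move=> le_im; rewrite /bm_term /bm_cert /moll_coef1 /moll_coef2 !subnn muln0 !bin0.
have -> : (2 * m.+2 - 2 * m.+1 = 2)%N by lia.
have -> : (m.+2 - m.+1 = 1)%N by lia.
have -> : (m.+1 + m.+1 = (m + m).+2)%N by lia.
have -> : (m.+2 + m.+1 = (m + m).+3)%N by lia.
have -> : (m.+2 + m.+2 = (m + m).+4)%N by lia.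
have -> : (m + m.+1 = (m + m).+1)%N by lia.
rewrite !natrM (natr_binSS (m + m).+3 m.+1) (@natr_binS _ (m + m).+2 m.+1); last by lia.
rewrite (@natr_binS _ (m + m).+1 m.+1); last by lia.
rewrite (natr_binSr m.+1 i) (@natr_binS _ m.+1 i); last by lia.
have -> : ((m + m).+3 - m.+1 = m.+2)%N by lia.
have -> : ((m + m).+2 - m.+1 = m.+1)%N by lia.
have -> : ((m.+2 - i)%:R = m%:R + 2 - i%:R :> rat).
  by rewrite natrB; [rewrite -addn2 natrD | lia].
have -> : ((m.+1 - i)%:R = m%:R + 1 - i%:R :> rat).
  by rewrite natrB; [rewrite -addn1 natrD | lia].
rewrite !exprS /bm_cert_poly (_ : 'C(2, 1) = 2)%N //.
have hm : (0 : rat) <= m%:R := ler0n _ _.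
have hi : (0 : rat) <= i%:R := ler0n _ _.
have him : (i%:R : rat) <= m%:R by rewrite ler_nat.
field; nonzero_by_nra.
Qed.

Lemma moll_rec (i m : nat) : (i <= m)%N ->
  moll_coef0 i m * bm_sum i m + moll_coef1 i m * bm_sum i m.+1
  + moll_coef2 i m * bm_sum i m.+2 = 0.
Proof.
move=> le_im.
have sum1 : bm_sum i m.+1 = \sum_(i <= k < m.+1) bm_term i m.+1 k + bm_term i m.+1 m.+1.
  by rewrite /bm_sum big_nat_recr //=; lia.
have sum2 : bm_sum i m.+2 = \sum_(i <= k < m.+1) bm_term i m.+2 k
                            + bm_term i m.+2 m.+1 + bm_term i m.+2 m.+2.
  by rewrite /bm_sum !big_nat_recr //=; lia.
have cert_i : bm_cert i m i = 0 by rewrite /bm_cert (bin_small (ltnSn i)) !muln0 !mulr0 !mul0r.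
have telescope : \sum_(i <= k < m.+1) (moll_coef0 i m * bm_term i m k
      + moll_coef1 i m * bm_term i m.+1 k + moll_coef2 i m * bm_term i m.+2 k)
    = bm_cert i m m.+1.
  rewrite (telescope_sumr_eq (bm_cert i m)) ?cert_i ?subr0 //; first lia.
  by move=> k /andP[le_ik lt_km]; apply: moll_rec_term; rewrite le_ik; lia.
rewrite !big_split /= -!mulr_sumr in telescope.
rewrite sum1 sum2 -[RHS](moll_rec_boundary le_im) -telescope /bm_sum; ring.
Qed.


Lemma bm_term_ge0 (i m k : nat) : 0 <= bm_term i m k.
Proof. by rewrite /bm_term mulr_ge0 // exprn_ge0. Qed.

Lemma bm_sum_gt0 (i m : nat) : (i <= m)%N -> 0 < bm_sum i m.
Proof.
move=> le_im; rewrite /bm_sum big_nat_recr //=.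
have rest_ge0 : 0 <= \sum_(i <= k < m) bm_term i m k.
  by apply: sumr_ge0 => k _; apply: bm_term_ge0.
have last_gt0 : 0 < bm_term i m m.
  rewrite /bm_term mulr_gt0 ?exprn_gt0 // ltr0n subnn !muln_gt0 !bin_gt0.
  by rewrite subnn le_im leq_addr.
exact: ltr_wpDl rest_ge0 last_gt0.
Qed.

Definition bm_ratio (i m : nat) : rat := bm_sum i m.+1 / (4 * bm_sum i m).

(* No hypothesis is needed: when bm_sum i m = 0 both sides are 0 since 0^-1 = 0. *)
Lemma boros_moll_ratio (i m : nat) : boros_moll i m.+1 / boros_moll i m = bm_ratio i m.
Proof.
rewrite /bm_ratio !boros_mollE.
have [->|nz] := eqVneq (bm_sum i m) 0; first by rewrite !(mulr0, invr0).
rewrite (_ : 2 * m.+1 = (2 * m).+2)%N; last by lia.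
have two_nz : 2%:R != 0 :> rat by [].
rewrite !exprS; field.
by rewrite nz expf_neq0.
Qed.

Lemma bm_ratio_gt0 (i m : nat) : (i <= m)%N -> 0 < bm_ratio i m.
Proof.
move=> le_im; rewrite /bm_ratio divr_gt0 ?mulr_gt0 ?bm_sum_gt0 //; lia.
Qed.

Definition ratio_A (i m : rat) : rat :=
  (8 * m ^+ 2 + 24 * m + 19 - 4 * i ^+ 2) / (2 * (m + 2) * (m + 2 - i)).
Definition ratio_B (i m : rat) : rat :=
  (m + i + 1) * (4 * m + 3) * (4 * m + 5) / (4 * (m + 1) * (m + 2) * (m + 2 - i)).

Lemma bm_ratio_rec (i m : nat) : (i <= m)%N ->
  bm_ratio i m.+1 = ratio_A i%:R m%:R - ratio_B i%:R m%:R / bm_ratio i m.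
Proof.
move=> le_im.
have sum0_gt0 := bm_sum_gt0 le_im.
have sum1_gt0 : 0 < bm_sum i m.+1 by apply: bm_sum_gt0; lia.
have hm : (0 : rat) <= m%:R := ler0n _ _.
have him : (i%:R : rat) <= m%:R by rewrite ler_nat.
have coef2_nz : moll_coef2 i m != 0.
  by rewrite /moll_coef2 oppr_eq0; nonzero_by_nra.
have sum2 : bm_sum i m.+2
    = - (moll_coef0 i m * bm_sum i m + moll_coef1 i m * bm_sum i m.+1) / moll_coef2 i m.
  apply: (mulfI coef2_nz); rewrite mulrCA mulfV // mulr1.
  by have := moll_rec le_im; lra.
rewrite /bm_ratio sum2 /moll_coef0 /moll_coef1 /moll_coef2 /ratio_A /ratio_B.
field; nonzero_by_nra.
Qed.

Definition lb_num (i m : rat) : rat :=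
  (4 * m ^+ 2 + 7 * m + i + 3) * (i ^+ 2 + i + m) + (m - i) * i ^+ 2.
Definition lb_den (i m : rat) : rat := 2 * (m + 1) * (m + 1 - i) * (i ^+ 2 + i + m).
Definition lower_bound (i m : rat) : rat := lb_num i m / lb_den i m.

Lemma bm_ratio_base (i : nat) : (1 <= i)%N -> bm_ratio i i = lower_bound i%:R i%:R.
Proof.
move=> i_gt0.
have sum0 : bm_sum i i = bm_term i i i by rewrite /bm_sum big_nat1.
have sum1 : bm_sum i i.+1 = bm_term i i.+1 i + bm_term i i.+1 i.+1.
  by rewrite /bm_sum big_nat_recr // big_nat1.
rewrite /bm_ratio sum0 sum1 /bm_term !subnn !bin0 binn binSn.
have -> : (2 * i.+1 - 2 * i = 2)%N by lia.
have -> : (i.+1 - i = 1)%N by lia.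
have -> : (i.+1 + i = (i + i).+1)%N by lia.
have -> : (i.+1 + i.+1 = (i + i).+2)%N by lia.
rewrite (_ : 'C(2, 1) = 2)%N // !natrM (natr_binSS (i + i).+1 i).
rewrite (@natr_binS _ (i + i) i) ?leq_addr //.
have -> : ((i + i).+1 - i = i.+1)%N by lia.
rewrite !exprS /lower_bound /lb_num /lb_den.
have binom_gt0 : (0 : rat) < 'C(i + i, i)%:R by rewrite ltr0n bin_gt0 leq_addr.
have i_ge1 : (1 : rat) <= i%:R by rewrite ler1n.
field.
by rewrite expf_neq0 //= andbT; nonzero_by_nra.
Qed.


Lemma lb_num_gt0 (i m : rat) : 0 < i -> i <= m -> 0 < lb_num i m.
Proof.
move=> i_gt0 le_im; rewrite /lb_num.
have : 0 < (4 * m ^+ 2 + 7 * m + i + 3) * (i ^+ 2 + i + m) by rewrite mulr_gt0 //; nra.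
have : 0 <= (m - i) * i ^+ 2 by rewrite mulr_ge0 ?sqr_ge0 ?subr_ge0.
lra.
Qed.

Lemma lb_den_gt0 (i m : rat) : 0 < i -> i <= m -> 0 < lb_den i m.
Proof. by move=> i_gt0 le_im; rewrite /lb_den !mulr_gt0 //; nra. Qed.

Lemma lower_bound_gt0 (i m : rat) : 0 < i -> i <= m -> 0 < lower_bound i m.
Proof. by move=> *; rewrite divr_gt0 ?lb_num_gt0 ?lb_den_gt0. Qed.

Lemma ratio_B_gt0 (i m : rat) : 0 <= i -> i <= m -> 0 < ratio_B i m.
Proof. by move=> i_ge0 le_im; rewrite /ratio_B divr_gt0 ?mulr_gt0 //; lra. Qed.

Definition lb_step_num (i m : rat) : rat :=
  ((8 * m ^+ 2 + 24 * m + 19 - 4 * i ^+ 2) * (2 * (m + 1)) * lb_num i m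
   - (m + i + 1) * (4 * m + 3) * (4 * m + 5) * lb_den i m) * lb_den i (m + 1)
  - lb_num i (m + 1) * (4 * (m + 1) * (m + 2) * (m + 2 - i)) * lb_num i m.

Lemma lower_bound_stepE (i m : rat) : 0 < i -> i <= m ->
  ratio_A i m - ratio_B i m / lower_bound i m - lower_bound i (m + 1)
  = lb_step_num i m / (4 * (m + 1) * (m + 2) * (m + 2 - i) * lb_num i m * lb_den i (m + 1)).
Proof.
move=> i_gt0 le_im.
have num_gt0 := lb_num_gt0 i_gt0 le_im.
have le_im1 : i <= m + 1 by apply: le_trans le_im _; rewrite lerDl.
have den_gt0 := lb_den_gt0 i_gt0 le_im1.
have den'_gt0 := lb_den_gt0 i_gt0 le_im.
rewrite /ratio_A /ratio_B /lower_bound /lb_step_num.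
move: num_gt0 den_gt0 den'_gt0.
move: (lb_num i m) (lb_num i (m + 1)) (lb_den i m) (lb_den i (m + 1)) => N N' D D' *.
field; nonzero_by_nra.
Qed.

(* In the variables j = i - 1 >= 0 and k = m - i >= 0 every coefficient is
   nonnegative; the digit groups a*1000+b keep the unary nat literals small. *)
Definition lb_step_cert (j k : nat) : nat :=
  ((1*1000+296) + (4*1000+608)*k^1 + (6*1000+564)*k^2 + (4*1000+796)*k^3 + (1*1000+900)*k^4
   + 388*k^5 + 32*k^6 + (5*1000+400)*j^1 + (17*1000+388)*j^1*k^1 + (22*1000+152)*j^1*k^2
   + (14*1000+268)*j^1*k^3 + (4*1000+888)*j^1*k^4 + 840*j^1*k^5 + 56*j^1*k^6
   + (9*1000+288)*j^2 + (26*1000+740)*j^2*k^1 + (29*1000+712)*j^2*k^2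
   + (16*1000+196)*j^2*k^3 + (4*1000+488)*j^2*k^4 + 576*j^2*k^5 + 24*j^2*k^6
   + (8*1000+544)*j^3 + (21*1000+696)*j^3*k^1 + (20*1000+376)*j^3*k^2 + (8*1000+872)*j^3*k^3
   + (1*1000+776)*j^3*k^4 + 128*j^3*k^5 + (4*1000+544)*j^4 + (10*1000+56)*j^4*k^1
   + (7*1000+692)*j^4*k^2 + (2*1000+468)*j^4*k^3 + 292*j^4*k^4 + 4*j^4*k^5
   + (1*1000+400)*j^5 + (2*1000+684)*j^5*k^1 + (1*1000+608)*j^5*k^2 + 340*j^5*k^3
   + 16*j^5*k^4 + 232*j^6 + 388*j^6*k^1 + 176*j^6*k^2 + 20*j^6*k^3 + 16*j^7 + 24*j^7*k^1
   + 8*j^7*k^2)%N.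

Lemma lb_step_numE (j k : nat) :
  lb_step_num j.+1%:R (j.+1 + k)%:R = (lb_step_cert j k)%:R.
Proof. rewrite /lb_step_num /lb_num /lb_den /lb_step_cert; ring. Qed.

Lemma lower_bound_step (i m : nat) : (0 < i <= m)%N ->
  lower_bound i%:R m.+1%:R <= ratio_A i%:R m%:R - ratio_B i%:R m%:R / lower_bound i%:R m%:R.
Proof.
move=> /andP[i_gt0 le_im].
have [j [k [-> ->]]] : exists j k, i = j.+1 /\ m = (j.+1 + k)%N.
  by exists i.-1, (m - i)%N; lia.
have j1_gt0 : (0 : rat) < j.+1%:R by rewrite ltr0Sn.
have le_jk : (j.+1%:R : rat) <= (j.+1 + k)%:R by rewrite ler_nat leq_addr.
have le_jk1 : (j.+1%:R : rat) <= (j.+1 + k)%:R + 1 by apply: le_trans le_jk _; rewrite lerDl.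
have jk_ge0 : (0 : rat) <= (j.+1 + k)%:R := ler0n _ _.
rewrite -subr_ge0 -[(j.+1 + k).+1%:R]natr1 (lower_bound_stepE j1_gt0 le_jk) lb_step_numE.
apply: divr_ge0; first exact: ler0n.
apply/ltW/mulr_gt0; last exact: lb_den_gt0 j1_gt0 le_jk1.
apply: mulr_gt0; last exact: lb_num_gt0 j1_gt0 le_jk.
rewrite !mulr_gt0 //; lra.
Qed.


Lemma bm_ratio_ge_lower_bound (i m : nat) : (0 < i <= m)%N ->
  lower_bound i%:R m%:R <= bm_ratio i m.
Proof.
move=> /andP[i_gt0 le_im]; rewrite -(subnKC le_im).
elim: (m - i)%N => [|k IH]; first by rewrite addn0 (bm_ratio_base i_gt0).
have le_ik : (i <= i + k)%N := leq_addr k i.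
have i_pos : (0 : rat) < i%:R by rewrite ltr0n.
have le_ik_rat : (i%:R : rat) <= (i + k)%:R by rewrite ler_nat.
rewrite addnS (bm_ratio_rec le_ik).
apply: le_trans (lower_bound_step _) _; first by rewrite i_gt0 le_ik.
have lb_gt0 := lower_bound_gt0 i_pos le_ik_rat.
rewrite lerD2l lerN2; apply: ler_wpM2l; first by rewrite ltW ?ratio_B_gt0 ?ler0n.
by rewrite lef_pV2 ?posrE // (lt_le_trans lb_gt0).
Qed.

(* Ratio log-convexity at three consecutive ratios x, y, z with
   y = A i m - B i m / x and z = A i (m + 1) - B i (m + 1) / y reduces to the
   positivity of this quartic at y. *)
Definition ratio_quartic (i m y : rat) : rat :=
  y ^+ 4 - ratio_A i m * y ^+ 3 + ratio_A i (m + 1) * ratio_B i m * y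
  - ratio_B i (m + 1) * ratio_B i m.

Definition quartic_den (i m : rat) : rat :=
  16 * (m + 1) * (m + 2) ^+ 2 * (m + 2 - i) * (m + 3) * (m + 3 - i).
Definition quartic_coef3 (i m : rat) : rat :=
  (8 * m ^+ 2 + 24 * m + 19 - 4 * i ^+ 2) * (8 * (m + 1) * (m + 2) * (m + 3) * (m + 3 - i)).
Definition quartic_coef1 (i m : rat) : rat :=
  (8 * (m + 1) ^+ 2 + 24 * (m + 1) + 19 - 4 * i ^+ 2)
  * (m + i + 1) * (4 * m + 3) * (4 * m + 5) * (2 * (m + 2)).
Definition quartic_coef0 (i m : rat) : rat :=
  (m + i + 2) * (4 * m + 7) * (4 * m + 9) * (m + i + 1) * (4 * m + 3) * (4 * m + 5).

Lemma ratio_quartic_scaled (i m y : rat) : 0 <= i -> i <= m ->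
  ratio_quartic i m y * quartic_den i m
  = quartic_den i m * y ^+ 4 - quartic_coef3 i m * y ^+ 3
    + quartic_coef1 i m * y - quartic_coef0 i m.
Proof.
move=> i_ge0 le_im.
rewrite /ratio_quartic /ratio_A /ratio_B /quartic_den /quartic_coef3 /quartic_coef1.
rewrite /quartic_coef0; field; nonzero_by_nra.
Qed.

(* The Taylor coefficients of the scaled quartic at y = lower_bound i (m + 1),
   in the variables j = i - 1 and k = m - i. *)
Definition quartic_cert0 (j k : nat) : nat :=
  ((((151*1000+913)*1000+408)*1000+255) + (((754*1000+293)*1000+594)*1000+816)*k^1
   + ((((1*1000+739)*1000+734)*1000+592)*1000+256)*k^2
   + ((((2*1000+472)*1000+746)*1000+48)*1000+304)*k^3
   + ((((2*1000+422)*1000+391)*1000+843)*1000+744)*k^4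
   + ((((1*1000+732)*1000+688)*1000+382)*1000+256)*k^5
   + (((934*1000+920)*1000+204)*1000+320)*k^6 + (((387*1000+543)*1000+584)*1000+736)*k^7
   + (((124*1000+441)*1000+470)*1000+192)*k^8 + (((30*1000+956)*1000+955)*1000+120)*k^9
   + (((5*1000+918)*1000+254)*1000+720)*k^10 + ((854*1000+3)*1000+216)*k^11
   + ((90*1000+52)*1000+48)*k^12 + ((6*1000+551)*1000+808)*k^13 + (294*1000+144)*k^14
   + (6*1000+144)*k^15 + ((((1*1000+347)*1000+232)*1000+226)*1000+112)*j^1
   + ((((6*1000+346)*1000+279)*1000+398)*1000+240)*j^1*k^1
   + ((((13*1000+834)*1000+18)*1000+61)*1000+280)*j^1*k^2
   + ((((18*1000+504)*1000+4)*1000+130)*1000+816)*j^1*k^3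
   + ((((16*1000+975)*1000+333)*1000+422)*1000+80)*j^1*k^4
   + ((((11*1000+306)*1000+268)*1000+589)*1000+408)*j^1*k^5
   + ((((5*1000+643)*1000+165)*1000+918)*1000+176)*j^1*k^6
   + ((((2*1000+146)*1000+924)*1000+396)*1000+416)*j^1*k^7
   + (((626*1000+790)*1000+835)*1000+840)*j^1*k^8
   + (((140*1000+144)*1000+72)*1000+896)*j^1*k^9
   + (((23*1000+735)*1000+776)*1000+128)*j^1*k^10
   + (((2*1000+978)*1000+400)*1000+64)*j^1*k^11 + ((266*1000+385)*1000+408)*j^1*k^12
   + ((15*1000+871)*1000+424)*j^1*k^13 + (553*1000+216)*j^1*k^14 + (8*1000+192)*j^1*k^15
   + ((((5*1000+589)*1000+895)*1000+819)*1000+104)*j^2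
   + ((((24*1000+902)*1000+273)*1000+286)*1000+384)*j^2*k^1
   + ((((51*1000+111)*1000+841)*1000+34)*1000+944)*j^2*k^2
   + ((((64*1000+47)*1000+21)*1000+314)*1000+256)*j^2*k^3
   + ((((54*1000+721)*1000+178)*1000+120)*1000+288)*j^2*k^4
   + ((((33*1000+708)*1000+419)*1000+701)*1000+184)*j^2*k^5
   + ((((15*1000+430)*1000+834)*1000+957)*1000+56)*j^2*k^6
   + ((((5*1000+329)*1000+261)*1000+964)*1000+448)*j^2*k^7
   + ((((1*1000+394)*1000+209)*1000+755)*1000+24)*j^2*k^8
   + (((274*1000+658)*1000+328)*1000+128)*j^2*k^9 + (((40*1000+50)*1000+614)*1000)*j^2*k^10
   + (((4*1000+183)*1000+952)*1000+608)*j^2*k^11 + ((295*1000+224)*1000+320)*j^2*k^12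
   + ((12*1000+546)*1000+496)*j^2*k^13 + (240*1000+896)*j^2*k^14
   + ((((14*1000+441)*1000+653)*1000+867)*1000+584)*j^3
   + ((((60*1000+656)*1000+226)*1000+211)*1000+936)*j^3*k^1
   + ((((116*1000+797)*1000+409)*1000+340)*1000+832)*j^3*k^2
   + ((((136*1000+518)*1000+489)*1000+471)*1000+808)*j^3*k^3
   + ((((108*1000+66)*1000+465)*1000+598)*1000+912)*j^3*k^4
   + ((((61*1000+178)*1000+591)*1000+333)*1000+472)*j^3*k^5
   + ((((25*1000+484)*1000+825)*1000+265)*1000+792)*j^3*k^6
   + ((((7*1000+910)*1000+808)*1000+280)*1000+992)*j^3*k^7
   + ((((1*1000+830)*1000+738)*1000+422)*1000+304)*j^3*k^8
   + (((312*1000+302)*1000+391)*1000+296)*j^3*k^9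
   + (((38*1000+266)*1000+973)*1000+376)*j^3*k^10
   + (((3*1000+209)*1000+583)*1000+328)*j^3*k^11 + ((168*1000+322)*1000+688)*j^3*k^12
   + ((4*1000+536)*1000+64)*j^3*k^13 + (32*1000+768)*j^3*k^14
   + ((((26*1000+69)*1000+577)*1000+801)*1000+792)*j^4
   + ((((102*1000+910)*1000+371)*1000+295)*1000+424)*j^4*k^1
   + ((((185*1000+219)*1000+766)*1000+21)*1000+104)*j^4*k^2
   + ((((201*1000+55)*1000+322)*1000+680)*1000+912)*j^4*k^3
   + ((((146*1000+676)*1000+667)*1000+680)*1000+800)*j^4*k^4
   + ((((75*1000+822)*1000+439)*1000+983)*1000+248)*j^4*k^5
   + ((((28*1000+513)*1000+172)*1000+245)*1000+584)*j^4*k^6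
   + ((((7*1000+875)*1000+106)*1000+814)*1000+336)*j^4*k^7
   + ((((1*1000+591)*1000+39)*1000+169)*1000+952)*j^4*k^8
   + (((230*1000+858)*1000+576)*1000+560)*j^4*k^9
   + (((23*1000+167)*1000+452)*1000+192)*j^4*k^10
   + (((1*1000+498)*1000+672)*1000+112)*j^4*k^11 + ((54*1000+302)*1000+816)*j^4*k^12
   + (771*1000+968)*j^4*k^13 + ((((34*1000+961)*1000+472)*1000+914)*1000+304)*j^5
   + ((((129*1000+286)*1000+555)*1000+780)*1000+288)*j^5*k^1
   + ((((216*1000+646)*1000+37)*1000+2)*1000+560)*j^5*k^2
   + ((((217*1000+376)*1000+129)*1000+425)*1000+184)*j^5*k^3
   + ((((145*1000+325)*1000+119)*1000+168)*1000+224)*j^5*k^4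
   + ((((68*1000+121)*1000+954)*1000+155)*1000+616)*j^5*k^5
   + ((((22*1000+926)*1000+65)*1000+642)*1000+272)*j^5*k^6
   + ((((5*1000+571)*1000+584)*1000+538)*1000+976)*j^5*k^7
   + (((968*1000+291)*1000+816)*1000+992)*j^5*k^8
   + (((117*1000+69)*1000+35)*1000+648)*j^5*k^9
   + (((9*1000+329)*1000+156)*1000+224)*j^5*k^10 + ((441*1000+817)*1000+344)*j^5*k^11
   + ((9*1000+912)*1000+576)*j^5*k^12 + (49*1000+152)*j^5*k^13
   + ((((36*1000+141)*1000+869)*1000+787)*1000+264)*j^6
   + ((((124*1000+756)*1000+861)*1000+701)*1000+792)*j^6*k^1
   + ((((193*1000+805)*1000+447)*1000+706)*1000+256)*j^6*k^2
   + ((((178*1000+814)*1000+898)*1000+270)*1000+32)*j^6*k^3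
   + ((((108*1000+857)*1000+949)*1000+524)*1000+304)*j^6*k^4
   + ((((45*1000+909)*1000+155)*1000+517)*1000+472)*j^6*k^5
   + ((((13*1000+690)*1000+132)*1000+421)*1000+840)*j^6*k^6
   + ((((2*1000+889)*1000+650)*1000+369)*1000+376)*j^6*k^7
   + (((424*1000+412)*1000+255)*1000+136)*j^6*k^8
   + (((41*1000+675)*1000+736)*1000+784)*j^6*k^9
   + (((2*1000+532)*1000+438)*1000+320)*j^6*k^10 + ((81*1000+439)*1000+360)*j^6*k^11
   + (931*1000+712)*j^6*k^12 + ((((29*1000+483)*1000+966)*1000+238)*1000+720)*j^7
   + ((((94*1000+625)*1000+927)*1000+74)*1000+624)*j^7*k^1
   + ((((135*1000+616)*1000+488)*1000+298)*1000+208)*j^7*k^2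
   + ((((114*1000+379)*1000+94)*1000+320)*1000+96)*j^7*k^3
   + ((((62*1000+941)*1000+152)*1000+621)*1000+152)*j^7*k^4
   + ((((23*1000+661)*1000+478)*1000+864)*1000+992)*j^7*k^5
   + ((((6*1000+177)*1000+646)*1000+445)*1000+824)*j^7*k^6
   + ((((1*1000+114)*1000+584)*1000+69)*1000+248)*j^7*k^7
   + (((135*1000+280)*1000+909)*1000+376)*j^7*k^8
   + (((10*1000+430)*1000+175)*1000+616)*j^7*k^9 + ((456*1000+288)*1000+256)*j^7*k^10
   + ((8*1000+826)*1000+624)*j^7*k^11 + (32*1000+768)*j^7*k^12
   + ((((19*1000+267)*1000+519)*1000+989)*1000+312)*j^8
   + ((((57*1000+236)*1000+129)*1000+32)*1000+640)*j^8*k^1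
   + ((((75*1000+256)*1000+108)*1000+896)*1000+432)*j^8*k^2
   + ((((57*1000+615)*1000+169)*1000+359)*1000+984)*j^8*k^3
   + ((((28*1000+407)*1000+262)*1000+640)*1000+96)*j^8*k^4
   + ((((9*1000+412)*1000+182)*1000+702)*1000+304)*j^8*k^5
   + ((((2*1000+119)*1000+607)*1000+754)*1000+928)*j^8*k^6
   + (((320*1000+239)*1000+984)*1000+736)*j^8*k^7
   + (((31*1000+172)*1000+49)*1000+616)*j^8*k^8 + (((1*1000+798)*1000+841)*1000+808)*j^8*k^9
   + ((51*1000+825)*1000+392)*j^8*k^10 + (480*1000+256)*j^8*k^11
   + ((((10*1000+177)*1000+520)*1000+625)*1000+984)*j^9
   + ((((27*1000+839)*1000+7)*1000+202)*1000+144)*j^9*k^1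
   + ((((33*1000+359)*1000+354)*1000+222)*1000+176)*j^9*k^2
   + ((((22*1000+988)*1000+190)*1000+755)*1000+840)*j^9*k^3
   + ((((10*1000+45)*1000+564)*1000+68)*1000+672)*j^9*k^4
   + ((((2*1000+891)*1000+800)*1000+860)*1000+416)*j^9*k^5
   + (((550*1000+881)*1000+228)*1000+608)*j^9*k^6
   + (((67*1000+784)*1000+98)*1000+528)*j^9*k^7 + (((5*1000+70)*1000+130)*1000+208)*j^9*k^8
   + ((203*1000+398)*1000+528)*j^9*k^9 + ((3*1000+295)*1000+744)*j^9*k^10
   + (8*1000+192)*j^9*k^11 + ((((4*1000+364)*1000+121)*1000+172)*1000+256)*j^10
   + ((((10*1000+925)*1000+157)*1000+129)*1000+584)*j^10*k^1
   + ((((11*1000+835)*1000+907)*1000+829)*1000+488)*j^10*k^2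
   + ((((7*1000+264)*1000+774)*1000+582)*1000+464)*j^10*k^3
   + ((((2*1000+774)*1000+811)*1000+865)*1000+312)*j^10*k^4
   + (((681*1000+31)*1000+183)*1000+344)*j^10*k^5
   + (((106*1000+854)*1000+394)*1000+864)*j^10*k^6
   + (((10*1000+286)*1000+439)*1000+72)*j^10*k^7 + ((553*1000+89)*1000+632)*j^10*k^8
   + ((13*1000+533)*1000+952)*j^10*k^9 + (85*1000+760)*j^10*k^10
   + ((((1*1000+519)*1000+286)*1000+990)*1000+528)*j^11
   + ((((3*1000+455)*1000+592)*1000+813)*1000+408)*j^11*k^1
   + ((((3*1000+351)*1000+91)*1000+817)*1000+920)*j^11*k^2
   + ((((1*1000+807)*1000+592)*1000+743)*1000+776)*j^11*k^3
   + (((592*1000+453)*1000+16)*1000+128)*j^11*k^4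
   + (((120*1000+783)*1000+52)*1000+288)*j^11*k^5
   + (((15*1000+12)*1000+331)*1000+584)*j^11*k^6 + (((1*1000+61)*1000+27)*1000+648)*j^11*k^7
   + ((36*1000+365)*1000+312)*j^11*k^8 + (399*1000+360)*j^11*k^9
   + (((427*1000+673)*1000+54)*1000+80)*j^12 + (((875*1000+967)*1000+921)*1000+600)*j^12*k^1
   + (((750*1000+810)*1000+317)*1000+856)*j^12*k^2
   + (((349*1000+609)*1000+327)*1000+408)*j^12*k^3
   + (((95*1000+845)*1000+394)*1000+160)*j^12*k^4
   + (((15*1000+620)*1000+488)*1000+592)*j^12*k^5
   + (((1*1000+445)*1000+165)*1000+168)*j^12*k^6 + ((66*1000+752)*1000+768)*j^12*k^7
   + ((1*1000+90)*1000+816)*j^12*k^8 + (((96*1000+497)*1000+720)*1000+64)*j^13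
   + (((176*1000+31)*1000+94)*1000+656)*j^13*k^1
   + (((131*1000+139)*1000+515)*1000+456)*j^13*k^2
   + (((51*1000+421)*1000+823)*1000+712)*j^13*k^3 + (((11*1000+354)*1000+676)*1000)*j^13*k^4
   + (((1*1000+390)*1000+945)*1000+472)*j^13*k^5 + ((85*1000+380)*1000+608)*j^13*k^6
   + ((1*1000+936)*1000+896)*j^13*k^7 + (((17*1000+198)*1000+176)*1000+256)*j^14
   + (((27*1000+551)*1000+100)*1000+416)*j^14*k^1
   + (((17*1000+431)*1000+889)*1000+152)*j^14*k^2
   + (((5*1000+548)*1000+764)*1000+800)*j^14*k^3 + ((928*1000+584)*1000+768)*j^14*k^4
   + ((76*1000+260)*1000+608)*j^14*k^5 + ((2*1000+337)*1000+24)*j^14*k^6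
   + (((2*1000+365)*1000+855)*1000+744)*j^15 + (((3*1000+267)*1000+425)*1000+280)*j^15*k^1
   + (((1*1000+697)*1000+225)*1000+216)*j^15*k^2 + ((413*1000+336)*1000+320)*j^15*k^3
   + ((46*1000+804)*1000+992)*j^15*k^4 + ((1*1000+940)*1000+480)*j^15*k^5
   + ((242*1000+227)*1000+200)*j^16 + ((281*1000+222)*1000+144)*j^16*k^1
   + ((113*1000+558)*1000+16)*j^16*k^2 + ((18*1000+940)*1000+672)*j^16*k^3
   + ((1*1000+94)*1000+400)*j^16*k^4 + ((17*1000+371)*1000+136)*j^17
   + ((16*1000+349)*1000+184)*j^17*k^1 + ((4*1000+633)*1000+600)*j^17*k^2
   + (400*1000+896)*j^17*k^3 + (778*1000+240)*j^18 + (561*1000+152)*j^18*k^1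
   + (86*1000+16)*j^18*k^2 + (16*1000+384)*j^19 + (8*1000+192)*j^19*k^1)%N.

Definition quartic_cert1 (j k : nat) : nat :=
  ((((9*1000+838)*1000+374)*1000+912) + (((42*1000+611)*1000+339)*1000+520)*k^1
   + (((84*1000+667)*1000+53)*1000+888)*k^2 + (((102*1000+192)*1000+767)*1000+168)*k^3
   + (((83*1000+599)*1000+375)*1000+888)*k^4 + (((48*1000+947)*1000+942)*1000+32)*k^5
   + (((21*1000+103)*1000+299)*1000+88)*k^6 + (((6*1000+783)*1000+325)*1000+936)*k^7
   + (((1*1000+625)*1000+559)*1000+232)*k^8 + ((286*1000+827)*1000+968)*k^9
   + ((36*1000+219)*1000+744)*k^10 + ((3*1000+99)*1000+456)*k^11 + (161*1000+88)*k^12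
   + (3*1000+840)*k^13 + (((66*1000+105)*1000+243)*1000+648)*j^1
   + (((267*1000+298)*1000+890)*1000+432)*j^1*k^1
   + (((492*1000+502)*1000+814)*1000+176)*j^1*k^2
   + (((546*1000+800)*1000+541)*1000+632)*j^1*k^3
   + (((407*1000+441)*1000+159)*1000+872)*j^1*k^4
   + (((214*1000+666)*1000+717)*1000+568)*j^1*k^5
   + (((82*1000+2)*1000+444)*1000+640)*j^1*k^6 + (((22*1000+884)*1000+121)*1000+24)*j^1*k^7
   + (((4*1000+630)*1000+257)*1000+248)*j^1*k^8 + ((662*1000+433)*1000+24)*j^1*k^9
   + ((63*1000+605)*1000+856)*j^1*k^10 + ((3*1000+680)*1000+128)*j^1*k^11
   + (97*1000+24)*j^1*k^12 + (((207*1000+292)*1000+19)*1000+712)*j^2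
   + (((780*1000+770)*1000+573)*1000+792)*j^2*k^1
   + ((((1*1000+330)*1000+402)*1000+760)*1000+944)*j^2*k^2
   + ((((1*1000+354)*1000+246)*1000+886)*1000+16)*j^2*k^3
   + (((915*1000+470)*1000+324)*1000+928)*j^2*k^4
   + (((431*1000+846)*1000+490)*1000+208)*j^2*k^5
   + (((145*1000+219)*1000+545)*1000+984)*j^2*k^6
   + (((34*1000+880)*1000+649)*1000+936)*j^2*k^7
   + (((5*1000+886)*1000+576)*1000+768)*j^2*k^8 + ((670*1000+290)*1000+912)*j^2*k^9
   + ((47*1000+414)*1000+432)*j^2*k^10 + ((1*1000+735)*1000+680)*j^2*k^11
   + (18*1000+432)*j^2*k^12 + (((402*1000+584)*1000+558)*1000+400)*j^3
   + ((((1*1000+408)*1000+841)*1000+243)*1000+40)*j^3*k^1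
   + ((((2*1000+213)*1000+133)*1000+860)*1000+224)*j^3*k^2
   + ((((2*1000+57)*1000+494)*1000+230)*1000+464)*j^3*k^3
   + ((((1*1000+255)*1000+724)*1000+449)*1000+856)*j^3*k^4
   + (((527*1000+72)*1000+64)*1000+544)*j^3*k^5
   + (((154*1000+747)*1000+517)*1000+696)*j^3*k^6
   + (((31*1000+627)*1000+131)*1000+104)*j^3*k^7
   + (((4*1000+376)*1000+562)*1000+944)*j^3*k^8 + ((385*1000+612)*1000+320)*j^3*k^9
   + ((19*1000+11)*1000+200)*j^3*k^10 + (376*1000+576)*j^3*k^11
   + (((541*1000+894)*1000+476)*1000+576)*j^4
   + ((((1*1000+756)*1000+784)*1000+569)*1000+744)*j^4*k^1
   + ((((2*1000+534)*1000+979)*1000+488)*1000+256)*j^4*k^2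
   + ((((2*1000+142)*1000+622)*1000+184)*1000)*j^4*k^3
   + ((((1*1000+173)*1000+793)*1000+666)*1000+592)*j^4*k^4
   + (((435*1000+73)*1000+398)*1000+208)*j^4*k^5
   + (((110*1000+381)*1000+505)*1000+792)*j^4*k^6
   + (((18*1000+914)*1000+49)*1000+968)*j^4*k^7 + (((2*1000+97)*1000+345)*1000+680)*j^4*k^8
   + ((137*1000+317)*1000+552)*j^4*k^9 + ((4*1000+316)*1000+160)*j^4*k^10
   + (32*1000+896)*j^4*k^11 + (((536*1000+6)*1000+4)*1000+480)*j^5
   + ((((1*1000+604)*1000+493)*1000+492)*1000+416)*j^5*k^1
   + ((((2*1000+117)*1000+764)*1000+842)*1000+656)*j^5*k^2
   + ((((1*1000+618)*1000+652)*1000+597)*1000+632)*j^5*k^3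
   + (((790*1000+416)*1000+712)*1000+640)*j^5*k^4
   + (((256*1000+311)*1000+860)*1000+672)*j^5*k^5
   + (((55*1000+466)*1000+834)*1000+592)*j^5*k^6 + (((7*1000+816)*1000+76)*1000+672)*j^5*k^7
   + ((672*1000+941)*1000+24)*j^5*k^8 + ((30*1000+809)*1000+216)*j^5*k^9
   + (523*1000+776)*j^5*k^10 + (((403*1000+26)*1000+525)*1000+920)*j^6
   + ((((1*1000+109)*1000+784)*1000+781)*1000+872)*j^6*k^1
   + ((((1*1000+333)*1000+316)*1000+679)*1000+456)*j^6*k^2
   + (((915*1000+651)*1000+53)*1000+952)*j^6*k^3
   + (((395*1000+177)*1000+705)*1000+264)*j^6*k^4
   + (((110*1000+812)*1000+581)*1000+872)*j^6*k^5
   + (((20*1000+115)*1000+151)*1000+664)*j^6*k^6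
   + (((2*1000+271)*1000+523)*1000+632)*j^6*k^7 + ((145*1000+152)*1000+720)*j^6*k^8
   + ((4*1000+212)*1000+544)*j^6*k^9 + (26*1000+496)*j^6*k^10
   + (((235*1000+20)*1000+94)*1000+16)*j^7 + (((592*1000+784)*1000+914)*1000+336)*j^7*k^1
   + (((644*1000+532)*1000+754)*1000+112)*j^7*k^2
   + (((394*1000+641)*1000+319)*1000+232)*j^7*k^3
   + (((148*1000+952)*1000+188)*1000+32)*j^7*k^4 + (((35*1000+586)*1000+3)*1000+104)*j^7*k^5
   + (((5*1000+300)*1000+51)*1000+648)*j^7*k^6 + ((462*1000+663)*1000+520)*j^7*k^7
   + ((20*1000+488)*1000+64)*j^7*k^8 + (314*1000+368)*j^7*k^9
   + (((107*1000+452)*1000+824)*1000+544)*j^8 + (((247*1000+54)*1000+553)*1000+72)*j^8*k^1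
   + (((241*1000+449)*1000+61)*1000+856)*j^8*k^2
   + (((130*1000+564)*1000+6)*1000+480)*j^8*k^3 + (((42*1000+525)*1000+905)*1000+40)*j^8*k^4
   + (((8*1000+488)*1000+981)*1000+392)*j^8*k^5 + (((1*1000+6)*1000+252)*1000+576)*j^8*k^6
   + ((64*1000+385)*1000+216)*j^8*k^7 + ((1*1000+761)*1000+216)*j^8*k^8
   + (9*1000+216)*j^8*k^9 + (((38*1000+668)*1000+751)*1000+232)*j^9
   + (((80*1000+598)*1000+266)*1000+688)*j^9*k^1
   + (((70*1000+222)*1000+521)*1000+792)*j^9*k^2
   + (((33*1000+140)*1000+273)*1000+792)*j^9*k^3
   + (((9*1000+154)*1000+144)*1000+288)*j^9*k^4 + (((1*1000+486)*1000+697)*1000+344)*j^9*k^5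
   + ((134*1000+178)*1000+560)*j^9*k^6 + ((5*1000+777)*1000+24)*j^9*k^7
   + (77*1000+824)*j^9*k^8 + (((10*1000+925)*1000+979)*1000+296)*j^10
   + (((20*1000+516)*1000+474)*1000+416)*j^10*k^1
   + (((15*1000+776)*1000+674)*1000+768)*j^10*k^2
   + (((6*1000+399)*1000+370)*1000+960)*j^10*k^3
   + (((1*1000+464)*1000+152)*1000+656)*j^10*k^4 + ((186*1000+156)*1000+224)*j^10*k^5
   + ((11*1000+926)*1000+272)*j^10*k^6 + (294*1000+912)*j^10*k^7 + (1*1000+24)*j^10*k^8
   + (((2*1000+401)*1000+402)*1000+624)*j^11 + (((4*1000+33)*1000+841)*1000+280)*j^11*k^1
   + (((2*1000+703)*1000+630)*1000+16)*j^11*k^2 + ((923*1000+458)*1000+80)*j^11*k^3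
   + ((169*1000+171)*1000+584)*j^11*k^4 + ((15*1000+848)*1000+960)*j^11*k^5
   + (634*1000+880)*j^11*k^6 + (6*1000+144)*j^11*k^7 + ((403*1000+161)*1000+216)*j^12
   + ((601*1000+33)*1000+152)*j^12*k^1 + ((345*1000+443)*1000+648)*j^12*k^2
   + ((96*1000+496)*1000+64)*j^12*k^3 + ((13*1000+416)*1000+128)*j^12*k^4
   + (829*1000+440)*j^12*k^5 + (15*1000+360)*j^12*k^6 + ((50*1000+91)*1000+8)*j^13
   + ((65*1000+687)*1000+40)*j^13*k^1 + ((31*1000+657)*1000+216)*j^13*k^2
   + ((6*1000+905)*1000+216)*j^13*k^3 + (659*1000+456)*j^13*k^4 + (20*1000+480)*j^13*k^5
   + ((4*1000+355)*1000+584)*j^14 + ((4*1000+973)*1000+824)*j^14*k^1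
   + ((1*1000+942)*1000+784)*j^14*k^2 + (303*1000+104)*j^14*k^3 + (15*1000+360)*j^14*k^4
   + (237*1000+568)*j^15 + (233*1000+472)*j^15*k^1 + (69*1000+632)*j^15*k^2
   + (6*1000+144)*j^15*k^3 + (6*1000+144)*j^16 + (5*1000+120)*j^16*k^1
   + (1*1000+24)*j^16*k^2)%N.

Definition quartic_cert2 (j k : nat) : nat :=
  (((244*1000+311)*1000+552) + ((909*1000+698)*1000+688)*k^1
   + (((1*1000+529)*1000+343)*1000+936)*k^2 + (((1*1000+532)*1000+533)*1000+728)*k^3
   + (((1*1000+17)*1000+266)*1000+352)*k^4 + ((469*1000+706)*1000+880)*k^5
   + ((153*1000+961)*1000+104)*k^6 + ((35*1000+828)*1000+400)*k^7
   + ((5*1000+801)*1000+376)*k^8 + (622*1000+512)*k^9 + (39*1000+840)*k^10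
   + (1*1000+152)*k^11 + (((1*1000+195)*1000+205)*1000+760)*j^1
   + (((4*1000+89)*1000+404)*1000+160)*j^1*k^1 + (((6*1000+255)*1000+313)*1000+440)*j^1*k^2
   + (((5*1000+634)*1000+224)*1000+160)*j^1*k^3 + (((3*1000+309)*1000+829)*1000+728)*j^1*k^4
   + (((1*1000+325)*1000+285)*1000+664)*j^1*k^5 + ((366*1000+357)*1000+408)*j^1*k^6
   + ((69*1000+48)*1000+576)*j^1*k^7 + ((8*1000+492)*1000+448)*j^1*k^8
   + (615*1000+552)*j^1*k^9 + (19*1000+968)*j^1*k^10 + (((2*1000+675)*1000+17)*1000+152)*j^2
   + (((8*1000+385)*1000+196)*1000+800)*j^2*k^1
   + (((11*1000+627)*1000+668)*1000+848)*j^2*k^2 + (((9*1000+371)*1000+40)*1000+144)*j^2*k^3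
   + (((4*1000+844)*1000+197)*1000+968)*j^2*k^4 + (((1*1000+669)*1000+578)*1000+480)*j^2*k^5
   + ((385*1000+310)*1000+496)*j^2*k^6 + ((57*1000+949)*1000+392)*j^2*k^7
   + ((5*1000+283)*1000+600)*j^2*k^8 + (246*1000+336)*j^2*k^9 + (3*1000+456)*j^2*k^10
   + (((3*1000+621)*1000+833)*1000+280)*j^3 + (((10*1000+363)*1000+213)*1000+920)*j^3*k^1
   + (((12*1000+966)*1000+235)*1000+872)*j^3*k^2 + (((9*1000+292)*1000+992)*1000+96)*j^3*k^3
   + (((4*1000+192)*1000+836)*1000+768)*j^3*k^4 + (((1*1000+229)*1000+856)*1000+96)*j^3*k^5
   + ((233*1000+4)*1000+480)*j^3*k^6 + ((27*1000+197)*1000+664)*j^3*k^7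
   + ((1*1000+739)*1000+904)*j^3*k^8 + (44*1000+544)*j^3*k^9
   + (((3*1000+304)*1000+219)*1000+104)*j^4 + (((8*1000+591)*1000+929)*1000+392)*j^4*k^1
   + (((9*1000+641)*1000+767)*1000+776)*j^4*k^2 + (((6*1000+95)*1000+942)*1000+112)*j^4*k^3
   + (((2*1000+373)*1000+911)*1000+616)*j^4*k^4 + ((583*1000+119)*1000+744)*j^4*k^5
   + ((88*1000+440)*1000+240)*j^4*k^6 + ((7*1000+666)*1000+176)*j^4*k^7
   + (312*1000+576)*j^4*k^8 + (3*1000+72)*j^4*k^9 + (((2*1000+140)*1000+101)*1000+504)*j^5
   + (((5*1000+30)*1000+307)*1000+456)*j^5*k^1 + (((5*1000+24)*1000+895)*1000+456)*j^5*k^2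
   + (((2*1000+772)*1000+950)*1000+400)*j^5*k^3 + ((917*1000+914)*1000+848)*j^5*k^4
   + ((184*1000+503)*1000+744)*j^5*k^5 + ((21*1000+563)*1000+904)*j^5*k^6
   + ((1*1000+290)*1000+240)*j^5*k^7 + (27*1000+648)*j^5*k^8
   + (((1*1000+9)*1000+183)*1000+680)*j^6 + (((2*1000+130)*1000+398)*1000+688)*j^6*k^1
   + (((1*1000+876)*1000+77)*1000+408)*j^6*k^2 + ((890*1000+844)*1000+816)*j^6*k^3
   + ((245*1000+337)*1000+840)*j^6*k^4 + ((38*1000+989)*1000+248)*j^6*k^5
   + ((3*1000+302)*1000+400)*j^6*k^6 + (119*1000+40)*j^6*k^7 + 768*j^6*k^8
   + ((349*1000+137)*1000+216)*j^7 + ((656*1000+699)*1000+40)*j^7*k^1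
   + ((503*1000+325)*1000+888)*j^7*k^2 + ((201*1000+587)*1000+424)*j^7*k^3
   + ((44*1000+733)*1000+312)*j^7*k^4 + ((5*1000+317)*1000+632)*j^7*k^5
   + (291*1000+840)*j^7*k^6 + (4*1000+608)*j^7*k^7 + ((87*1000+950)*1000+880)*j^8
   + ((145*1000+932)*1000+912)*j^8*k^1 + ((95*1000+637)*1000+936)*j^8*k^2
   + ((31*1000+356)*1000+672)*j^8*k^3 + ((5*1000+319)*1000+936)*j^8*k^4
   + (426*1000+240)*j^8*k^5 + (11*1000+520)*j^8*k^6 + ((15*1000+731)*1000+712)*j^9
   + ((22*1000+731)*1000+264)*j^9*k^1 + ((12*1000+409)*1000+344)*j^9*k^2
   + ((3*1000+170)*1000+304)*j^9*k^3 + (371*1000+712)*j^9*k^4 + (15*1000+360)*j^9*k^5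
   + ((1*1000+896)*1000+192)*j^10 + ((2*1000+345)*1000+88)*j^10*k^1
   + ((1*1000+22)*1000+592)*j^10*k^2 + (185*1000+88)*j^10*k^3 + (11*1000+520)*j^10*k^4
   + (138*1000+240)*j^11 + (142*1000+848)*j^11*k^1 + (46*1000+80)*j^11*k^2
   + (4*1000+608)*j^11*k^3 + (4*1000+608)*j^12 + (3*1000+840)*j^12*k^1 + 768*j^12*k^2)%N.

Definition quartic_cert3 (j k : nat) : nat :=
  (((2*1000+488)*1000+320) + ((7*1000+679)*1000+232)*k^1 + ((10*1000+445)*1000+760)*k^2
   + ((8*1000+224)*1000+704)*k^3 + ((4*1000+133)*1000+680)*k^4 + ((1*1000+376)*1000+240)*k^5
   + (303*1000+760)*k^6 + (42*1000+896)*k^7 + (3*1000+520)*k^8 + 128*k^9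
   + ((7*1000+810)*1000+560)*j^1 + ((21*1000+568)*1000+320)*j^1*k^1
   + ((25*1000+835)*1000+808)*j^1*k^2 + ((17*1000+543)*1000+104)*j^1*k^3
   + ((7*1000+389)*1000+856)*j^1*k^4 + ((1*1000+978)*1000+688)*j^1*k^5
   + (329*1000+88)*j^1*k^6 + (31*1000+104)*j^1*k^7 + (1*1000+280)*j^1*k^8
   + ((10*1000+646)*1000+784)*j^2 + ((26*1000+125)*1000+344)*j^2*k^1
   + ((27*1000+308)*1000+48)*j^2*k^2 + ((15*1000+799)*1000+296)*j^2*k^3
   + ((5*1000+486)*1000+800)*j^2*k^4 + ((1*1000+153)*1000+520)*j^2*k^5
   + (139*1000+24)*j^2*k^6 + (8*1000+128)*j^2*k^7 + 128*j^2*k^8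
   + ((8*1000+230)*1000+848)*j^3 + ((17*1000+776)*1000+736)*j^3*k^1
   + ((15*1000+992)*1000+576)*j^3*k^2 + ((7*1000+727)*1000+840)*j^3*k^3
   + ((2*1000+147)*1000+8)*j^3*k^4 + (337*1000+472)*j^3*k^5 + (26*1000+880)*j^3*k^6
   + 768*j^3*k^7 + ((3*1000+948)*1000+384)*j^4 + ((7*1000+411)*1000+120)*j^4*k^1
   + ((5*1000+624)*1000+32)*j^4*k^2 + ((2*1000+198)*1000+448)*j^4*k^3
   + (463*1000+72)*j^4*k^4 + (49*1000+88)*j^4*k^5 + (1*1000+984)*j^4*k^6
   + ((1*1000+204)*1000+224)*j^5 + ((1*1000+931)*1000+648)*j^5*k^1
   + ((1*1000+199)*1000+936)*j^5*k^2 + (359*1000+744)*j^5*k^3 + (51*1000+712)*j^5*k^4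
   + (2*1000+816)*j^5*k^5 + (228*1000+192)*j^6 + (305*1000+744)*j^6*k^1
   + (148*1000+176)*j^6*k^2 + (30*1000+784)*j^6*k^3 + (2*1000+304)*j^6*k^4
   + (24*1000+576)*j^7 + (26*1000+624)*j^7*k^1 + (9*1000+216)*j^7*k^2 + (1*1000+24)*j^7*k^3
   + (1*1000+152)*j^8 + 960*j^8*k^1 + 192*j^8*k^2)%N.

Lemma quartic_taylorE (j k : nat) (s : rat) :
  let i := j.+1%:R in let m := (j.+1 + k)%:R in
  let N := lb_num i (m + 1) in let D := lb_den i (m + 1) in
  quartic_den i m * (N + s) ^+ 4 - quartic_coef3 i m * (N + s) ^+ 3 * D
  + quartic_coef1 i m * (N + s) * D ^+ 3 - quartic_coef0 i m * D ^+ 4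
  = (quartic_cert0 j k).+1%:R + (quartic_cert1 j k)%:R * s + (quartic_cert2 j k)%:R * s ^+ 2
    + (quartic_cert3 j k)%:R * s ^+ 3 + quartic_den i m * s ^+ 4.
Proof.
rewrite /= /lb_num /lb_den /quartic_den /quartic_coef3 /quartic_coef1 /quartic_coef0.
rewrite /quartic_cert0 /quartic_cert1 /quartic_cert2 /quartic_cert3; ring.
Qed.


Lemma quartic_den_gt0 (i m : rat) : 0 <= i -> i <= m -> 0 < quartic_den i m.
Proof. by move=> i_ge0 le_im; rewrite /quartic_den !mulr_gt0 ?exprn_gt0 //; lra. Qed.

Lemma ratio_quartic_gt0 (i m : nat) (y : rat) : (0 < i <= m)%N ->
  lower_bound i%:R m.+1%:R <= y -> 0 < ratio_quartic i%:R m%:R y.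
Proof.
move=> /andP[i_gt0 le_im].
have [j [k [-> ->]]] : exists j k, i = j.+1 /\ m = (j.+1 + k)%N.
  by exists i.-1, (m - i)%N; lia.
have j1_gt0 : (0 : rat) < j.+1%:R by rewrite ltr0Sn.
have le_jk : (j.+1%:R : rat) <= (j.+1 + k)%:R by rewrite ler_nat leq_addr.
have le_jk1 : (j.+1%:R : rat) <= (j.+1 + k)%:R + 1 by apply: le_trans le_jk _; rewrite lerDl.
have den_gt0 := quartic_den_gt0 (ltW j1_gt0) le_jk.
rewrite -[(j.+1 + k).+1%:R]natr1 /lower_bound.
have := quartic_taylorE j k; rewrite /=.
move: (lb_num_gt0 j1_gt0 le_jk1) (lb_den_gt0 j1_gt0 le_jk1).
move: (lb_num _ _) (lb_den _ _) => N D N_gt0 D_gt0 taylorE lb_le_y.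
pose s := y * D - N.
have s_ge0 : 0 <= s by rewrite subr_ge0 -ler_pdivrMr.
have y_eq : y = (N + s) / D by rewrite /s addrC subrK mulfK ?lt0r_neq0.
have scaled : ratio_quartic j.+1%:R (j.+1 + k)%:R y * (quartic_den j.+1%:R (j.+1 + k)%:R * D ^+ 4)
    = quartic_den j.+1%:R (j.+1 + k)%:R * (N + s) ^+ 4
      - quartic_coef3 j.+1%:R (j.+1 + k)%:R * (N + s) ^+ 3 * D
      + quartic_coef1 j.+1%:R (j.+1 + k)%:R * (N + s) * D ^+ 3
      - quartic_coef0 j.+1%:R (j.+1 + k)%:R * D ^+ 4.
  rewrite mulrA (ratio_quartic_scaled _ (ltW j1_gt0) le_jk) y_eq.
  move: (quartic_den _ _) (quartic_coef3 _ _) (quartic_coef1 _ _) (quartic_coef0 _ _).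
  by move=> c4 c3 c1 c0; field; rewrite lt0r_neq0.
move: scaled; rewrite taylorE.
move: (quartic_cert0 j k) (quartic_cert1 j k) (quartic_cert2 j k) (quartic_cert3 j k).
move: (quartic_den _ _) den_gt0 => c4 c4_gt0 a0 a1 a2 a3 scaled.
have taylor_gt0 : 0 < a0.+1%:R + a1%:R * s + a2%:R * s ^+ 2 + a3%:R * s ^+ 3 + c4 * s ^+ 4.
  have := ltr0Sn rat a0; have := mulr_ge0 (ler0n rat a1) s_ge0.
  have := mulr_ge0 (ler0n rat a2) (exprn_ge0 2 s_ge0).
  have := mulr_ge0 (ler0n rat a3) (exprn_ge0 3 s_ge0).
  have := mulr_ge0 (ltW c4_gt0) (exprn_ge0 4 s_ge0).
  lra.
by move: taylor_gt0; rewrite -scaled pmulr_lgt0 // mulr_gt0 ?exprn_gt0.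
Qed.

Lemma sqr_lt_mul_of_quartic_gt0 (R : realFieldType) (A B A' B' x y z : R) :
  0 < x -> 0 < y -> 0 < B -> y = A - B / x -> z = A' - B' / y ->
  0 < y ^+ 4 - A * y ^+ 3 + A' * B * y - B' * B -> y ^+ 2 < x * z.
Proof.
move=> x_gt0 y_gt0 B_gt0 y_eq z_eq.
have -> : A = y + B / x by rewrite y_eq; ring.
have -> : y ^+ 4 - (y + B / x) * y ^+ 3 + A' * B * y - B' * B
    = B / x * (x * (A' * y - B') - y ^+ 3) by field; rewrite lt0r_neq0.
rewrite pmulr_rgt0 ?divr_gt0 // => pos.
have : x * z - y ^+ 2 = (x * (A' * y - B') - y ^+ 3) / y by rewrite z_eq; field; rewrite lt0r_neq0.
by rewrite -subr_gt0 => ->; rewrite divr_gt0.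
Qed.

Theorem theorem3p1 (i m : nat) :
  (1 <= i)%N -> (i + 2 <= m)%N ->
  (boros_moll i m / boros_moll i m.-1) ^+ 2 <
  (boros_moll i m.-1 / boros_moll i m.-2) * (boros_moll i m.+1 / boros_moll i m).
Proof.
move=> i_gt0 le_im2.
have [n [-> le_in]] : exists n, m = n.+2 /\ (i <= n)%N by exists m.-2; lia.
rewrite /= !boros_moll_ratio.
have le_in1 : (i <= n.+1)%N := leqW le_in.
apply: sqr_lt_mul_of_quartic_gt0 (bm_ratio_rec le_in) (bm_ratio_rec le_in1) _.
- exact: bm_ratio_gt0.
- exact: bm_ratio_gt0.
- by rewrite ratio_B_gt0 ?ler0n ?ler_nat.
- rewrite -natr1; apply: ratio_quartic_gt0; first by rewrite i_gt0.
  by apply: bm_ratio_ge_lower_bound; rewrite i_gt0.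
Qed.
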